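(* Let $\vdash$ be the logic determined by a finite set $\mathsf{M}$ of finite matrices. (1) $\vdash$ is protoalgebraic if and only if there is a set of formulas $\Delta(x,y)$ in the variables $x,y$ such that $\emptyset\vdash\Delta(x,x)$ and $x,\Delta(x,y)\vdash y$. (2) $\vdash$ is equivalential if and only if there is a set of formulas $\Delta(x,y)$ satisfying the conditions in (1) and such that for every basic $n$-ary operation $f$, $\Delta(x_1,y_1)\cup\dots\cup\Delta(x_n,y_n)\vdash\Delta(f(x_1,\dots,x_n),f(y_1,\dots,y_n))$. Moreover, in this case, for every model $\langle\mathbf{A},F\rangle$ of $\vdash$ and $a,b\in A$: $\langle a,b\rangle\in\Omega^{\mathbf{A}}F$ iff $\Delta(a,b)\subseteq F$. (3) $\vdash$ is weakly algebraizable (resp. algebraizable) if and only if it is protoalgebraic (resp. equivalential) and there is a set of equations $\tau(x)$ such that for all $\langle\mathbf{B},F\rangle\in\mathbb{S}(\mathsf{M})$ and $b\in B$: $b\in F$ iff $\mathbf{B}/\Omega^{\mathbf{B}}F\vDash\tau(b/\Omega^{\mathbf{B}}F)$.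
   Context: A (logical) matrix is a pair $\langle \mathbf{A}, F\rangle$ with $\mathbf{A}$ an algebra and $F\subseteq A$. The Leibniz congruence $\Omega^{\mathbf{A}}F$ is the largest congruence of $\mathbf{A}$ for which $F$ is a union of blocks; a matrix is reduced if it is the identity. A logic is a substitution-invariant closure relation on formulas of a fixed algebraic language; a class $\mathsf{M}$ of matrices determines $\vdash_{\mathsf{M}}$: $\Gamma\vdash_{\mathsf{M}}\varphi$ iff for every $\langle\mathbf{A},F\rangle\in\mathsf{M}$ and every evaluation $f$ into $\mathbf{A}$, $f[\Gamma]\subseteq F$ implies $f(\varphi)\in F$. A model of $\vdash$ is a matrix $\langle\mathbf{A},F\rangle$ with $\vdash\subseteq\vdash_{\langle\mathbf{A},F\rangle}$; $\mathrm{Mod}^{*}(\vdash)$ is the class of reduced models. $\mathbb{S}(\mathsf{M})$ is the class of submatrices $\langle\mathbf{B},F\cap B\rangle$ with $\mathbf{B}$ a subalgebra of $\mathbf{A}$ and $\langle\mathbf{A},F\rangle\in\mathsf{M}$. $\vdash$ is protoalgebraic if there is a set of formulas $\Delta(x,y,\vec z)$ such that for every model $\langle\mathbf{A},F\rangle$ and $a,b\in A$: $\langle a,b\rangle\in\Omega^{\mathbf{A}}F$ iff $\Delta(a,b,\vec c)\subseteq F$ for all $\vec c\in A$; equivalential if such $\Delta$ exists without parameters $\vec z$. $\vdash$ is truth-equational if there is a set of equations $\tau(x)$ with $F=\{a:\mathbf{A}\vDash\tau(a)\}$ for every $\langle\mathbf{A},F\rangle\in\mathrm{Mod}^{*}(\vdash)$.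 Algebraizable = equivalential and truth-equational; weakly algebraizable = protoalgebraic and truth-equational. *)

From Stdlib Require List.
From Stdlib Require Import IndefiniteDescription.
From mathcomp Require Import all_boot.

Set Implicit Arguments.
Unset Strict Implicit.
Unset Printing Implicit Defensive.

Section AAL.

Variable Op : Type.
Variable ar : Op -> nat.

(* Formulas: variables are indexed by nat (x = 0, y = 1). *)
Inductive term : Type :=
| Var : nat -> term
| App : forall f : Op, ('I_(ar f) -> term) -> term.
Arguments App f args : clear implicits.

Fixpoint vars_in (P : nat -> Prop) (t : term) : Prop :=
  match t with
  | Var n => P n
  | App f args => forall i, vars_in P (args i)
  end.

Fixpoint subst (s : nat -> term) (t : term) : term :=
  match t with
  | Var n => s n
  | App f args => App f (fun i => subst s (args i))
  end.

Record algebra : Type := Algebra {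
  carrier :> Type;
  op : forall f : Op, ('I_(ar f) -> carrier) -> carrier }.
Arguments op a f _ : clear implicits.

Fixpoint eval (A : algebra) (v : nat -> A) (t : term) : A :=
  match t with
  | Var n => v n
  | App f args => op A f (fun i => eval v (args i))
  end.

Record matrix : Type := Matrix { malg : algebra; mfil : malg -> Prop }.
Arguments mfil : clear implicits.

Definition finite_type (T : Type) : Prop := exists s : list T, forall x, List.In x s.

Definition logic := (term -> Prop) -> term -> Prop.

Definition mat_cons (A : algebra) (F : A -> Prop) : logic :=
  fun Gamma phi => forall v : nat -> A,
    (forall g, Gamma g -> F (eval v g)) -> F (eval v phi).

Definition cons_of (M : list matrix) : logic :=
  fun Gamma phi => forall m, List.In m M -> mat_cons (mfil m) Gamma phi.

Definition model (L : logic) (A : algebra) (F : A -> Prop) : Prop :=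
  forall Gamma phi, L Gamma phi -> mat_cons F Gamma phi.

Definition is_congruence (A : algebra) (th : A -> A -> Prop) : Prop :=
  [/\ (forall a, th a a), (forall a b, th a b -> th b a),
      (forall a b c, th a b -> th b c -> th a c) &
      (forall f (u w : 'I_(ar f) -> A), (forall i, th (u i) (w i)) ->
          th (op A f u) (op A f w))].

Definition compatible (A : algebra) (th : A -> A -> Prop) (F : A -> Prop) :=
  forall a b, th a b -> F a -> F b.

(* Leibniz congruence: the largest congruence compatible with F,
   i.e. the union of all compatible congruences. *)
Definition Leibniz (A : algebra) (F : A -> Prop) : A -> A -> Prop :=
  fun a b => exists th, [/\ is_congruence th, compatible th F & th a b].

Definition reduced (A : algebra) (F : A -> Prop) : Prop :=
  forall a b, Leibniz F a b -> a = b.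

Definition xy_var (n : nat) : Prop := n = 0 \/ n = 1.

(* evaluation x |-> a, y |-> b (other variables |-> b; irrelevant for
   formulas in x, y only) *)
Definition val2 (A : algebra) (a b : A) : nat -> A :=
  fun n => if n == 0 then a else b.

Definition protoalgebraic (L : logic) : Prop :=
  exists Delta : term -> Prop,
    forall (A : algebra) (F : A -> Prop), model L F ->
    forall a b : A, Leibniz F a b <->
      (forall v : nat -> A, v 0 = a -> v 1 = b ->
         forall d, Delta d -> F (eval v d)).

Definition equivalential (L : logic) : Prop :=
  exists Delta : term -> Prop,
    (forall d, Delta d -> vars_in xy_var d) /\
    forall (A : algebra) (F : A -> Prop), model L F ->
    forall a b : A, Leibniz F a b <->
      (forall d, Delta d -> F (eval (val2 a b) d)).

(* equations are pairs of formulas; tau(x) = equations in the variable x *)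
Definition eqs_in_x (tau : term * term -> Prop) : Prop :=
  forall e, tau e -> vars_in (fun n => n = 0) e.1 /\ vars_in (fun n => n = 0) e.2.

Definition sat_eqs (A : algebra) (tau : term * term -> Prop) (a : A) : Prop :=
  forall e, tau e -> eval (fun _ => a) e.1 = eval (fun _ => a) e.2.
Arguments sat_eqs : clear implicits.

Definition truth_equational (L : logic) : Prop :=
  exists tau : term * term -> Prop, eqs_in_x tau /\
    forall (A : algebra) (F : A -> Prop), model L F -> reduced F ->
    forall a : A, F a <-> sat_eqs A tau a.

Definition algebraizable (L : logic) : Prop :=
  equivalential L /\ truth_equational L.

Definition weakly_algebraizable (L : logic) : Prop :=
  protoalgebraic L /\ truth_equational L.

Definition op_closed (A : algebra) (S : A -> Prop) : Prop :=
  forall f (u : 'I_(ar f) -> A), (forall i, S (u i)) -> S (op A f u).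

Definition sub_carrier (A : algebra) (S : A -> Prop) := {a : A | S a}.

Definition sub_op (A : algebra) (S : A -> Prop) (hS : op_closed S) (f : Op)
  (u : 'I_(ar f) -> sub_carrier S) : sub_carrier S :=
  exist _ (op A f (fun i => proj1_sig (u i))) (hS f _ (fun i => proj2_sig (u i))).

Definition sub_alg (A : algebra) (S : A -> Prop) (hS : op_closed S) : algebra :=
  @Algebra (sub_carrier S) (sub_op hS).

(* Quotient algebra A / th (meaningful when th is a congruence):
   elements are the classes th a; operations act on representatives. *)
Definition quot_carrier (A : algebra) (th : A -> A -> Prop) :=
  {P : A -> Prop | exists a, P = th a}.

Definition qclass (A : algebra) (th : A -> A -> Prop) (a : A) : quot_carrier th :=
  exist _ (th a) (ex_intro _ a erefl).

Definition qrep (A : algebra) (th : A -> A -> Prop) (c : quot_carrier th) : A :=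
  proj1_sig (constructive_indefinite_description _ (proj2_sig c)).

Definition quot_op (A : algebra) (th : A -> A -> Prop) (f : Op)
  (u : 'I_(ar f) -> quot_carrier th) : quot_carrier th :=
  qclass th (op A f (fun i => qrep (u i))).

Definition quot_alg (A : algebra) (th : A -> A -> Prop) : algebra :=
  @Algebra (quot_carrier th) (quot_op (th := th)).

(* Delta(x,x): y := x *)
Definition s_xx (n : nat) : term := if n == 1 then Var 0 else Var n.
(* Delta(x_i, y_i) with x_i = 2i, y_i = 2i+1 *)
Definition s_i (i : nat) (n : nat) : term :=
  if n == 0 then Var (2 * i) else if n == 1 then Var (2 * i + 1) else Var n.
(* Delta(f(x_1..x_n), f(y_1..y_n)) *)
Definition s_f (f : Op) (n : nat) : term :=
  if n == 0 then App f (fun i : 'I_(ar f) => Var (2 * i))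
  else if n == 1 then App f (fun i : 'I_(ar f) => Var (2 * i + 1)) else Var n.

Definition cond1 (L : logic) (Delta : term -> Prop) : Prop :=
  [/\ (forall d, Delta d -> vars_in xy_var d),
      (forall d, Delta d -> L (fun _ => False) (subst s_xx d)) &
      L (fun phi => phi = Var 0 \/ Delta phi) (Var 1)].

Definition cond2 (L : logic) (Delta : term -> Prop) : Prop :=
  cond1 L Delta /\
  forall f : Op,
    let prem := fun phi => exists (i : 'I_(ar f)) d, Delta d /\ phi = subst (s_i i) d in
    forall d, Delta d -> L prem (subst (s_f f) d).

Definition cond3 (M : list matrix) (tau : term * term -> Prop) : Prop :=
  eqs_in_x tau /\
  forall m, List.In m M ->
  forall (S : malg m -> Prop) (hS : op_closed S) (b : sub_alg hS),
    let FB := fun c : sub_alg hS => mfil m (proj1_sig c) in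
    FB b <-> sat_eqs (quot_alg (Leibniz FB)) tau (qclass (Leibniz FB) b).

End AAL.

(* The Leibniz congruence of a matrix <A, F> is indistinguishability by unary
   polynomial functions: a Ω b iff F (p a) <-> F (p b) for every polynomial p.
   Hence if |- Δ(x,x) and x, Δ(x,y) |- y, then Ω F is cut out by Δ(p a, p b) ⊆ F
   over all polynomials p, i.e. by Δ with parameters; the congruence rules of (2)
   make Δ(a,b) ⊆ F stable under polynomials, so the parameters disappear.
   Conversely a parametrized Δ(x,y,z) becomes parameter-free by substituting all
   terms in x, y for z, since in the submatrix generated by a and b every element
   is the value of such a term.  For (3), quotients by Ω are reduced models, and in
   the generated submatrices of M the condition on τ says that
   x |- Δ(s(x), t(x), z) and {Δ(s(x), t(x), z) : s ≈ t ∈ τ} |- x, which transfers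
   to every reduced model. *)

From mathcomp Require Import all_boot.
From Stdlib Require Import FunctionalExtensionality PropExtensionality.
From Stdlib Require Import ProofIrrelevance IndefiniteDescription.

Set Implicit Arguments.
Unset Strict Implicit.
Unset Printing Implicit Defensive.

Section Algebras.
Variables (Op : Type) (ar : Op -> nat).
Implicit Types (A B : algebra ar) (t : term ar) (L : logic ar).

Lemma eval_subst A (v : nat -> A) s t :
  eval v (subst s t) = eval (fun n => eval v (s n)) t.
Proof.
by elim: t => [n|f args IH] //=; congr op; apply: functional_extensionality.
Qed.

Lemma eval_ext A (v w : nat -> A) t : v =1 w -> eval v t = eval w t.
Proof. by move/functional_extensionality ->. Qed.

Lemma eval_eq_on (P : nat -> Prop) A (v w : nat -> A) t :
  vars_in P t -> (forall n, P n -> v n = w n) -> eval v t = eval w t.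
Proof.
move=> Pt vw; elim: t Pt => [n|f args IH] /= Pt; first exact: vw.
by congr op; apply: functional_extensionality => i; apply: IH.
Qed.

Lemma eval_xy A (v w : nat -> A) t :
  vars_in xy_var t -> v 0 = w 0 -> v 1 = w 1 -> eval v t = eval w t.
Proof. by move=> xyt v0 v1; apply: (eval_eq_on xyt) => n [->|->]. Qed.

Lemma eval_x A (v w : nat -> A) t :
  vars_in (fun n => n = 0) t -> v 0 = w 0 -> eval v t = eval w t.
Proof. by move=> xt v0; apply: (eval_eq_on xt) => n ->. Qed.

Lemma vars_in_subst (P : nat -> Prop) s t :
  (forall n, vars_in P (s n)) -> vars_in P (subst s t).
Proof. by move=> Ps; elim: t => [n|f args IH] /=. Qed.

Definition hom A B (h : A -> B) :=
  forall f (u : 'I_(ar f) -> A), h (op u) = op (fun i => h (u i)).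

Lemma eval_hom A B (h : A -> B) (v : nat -> A) t :
  hom h -> h (eval v t) = eval (fun n => h (v n)) t.
Proof.
move=> hh; elim: t => [n|f args IH] //=.
by rewrite hh; congr op; apply: functional_extensionality.
Qed.

Lemma model_hom_preimage L A B (h : A -> B) (G : B -> Prop) :
  hom h -> model L G -> model L (fun a => G (h a)).
Proof.
move=> hh GL Gamma phi Lphi v Gv.
by rewrite eval_hom //; apply: (GL _ _ Lphi) => g /Gv; rewrite eval_hom.
Qed.

Lemma model_hom_image L A B (h : A -> B) (s : B -> A) (F : A -> Prop) (G : B -> Prop) :
  hom h -> cancel s h -> (forall a, G (h a) <-> F a) -> model L F -> model L G.
Proof.
move=> hh sK GF FL Gamma phi Lphi v Gv.
have eval_s t : eval v t = h (eval (fun n => s (v n)) t).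
  by rewrite eval_hom //; apply: eval_ext => n; rewrite sK.
rewrite eval_s GF; apply: (FL _ _ Lphi) => g /Gv.
by rewrite eval_s GF.
Qed.

Definition op_compat A (th : A -> A -> Prop) :=
  forall f (u w : 'I_(ar f) -> A), (forall i, th (u i) (w i)) -> th (op u) (op w).

Lemma eval_compat A (th : A -> A -> Prop) (v w : nat -> A) t :
  op_compat th -> (forall n, th (v n) (w n)) -> th (eval v t) (eval w t).
Proof. by move=> thop vw; elim: t => [n|f args IH] /=; [apply: vw | apply: thop]. Qed.

Lemma op_compat_coordinatewise A (th : A -> A -> Prop) :
  (forall a, th a a) -> (forall a b c, th a b -> th b c -> th a c) ->
  (forall f (u w : 'I_(ar f) -> A) i,
     (forall j, j != i -> u j = w j) -> th (u i) (w i) -> th (op u) (op w)) ->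
  op_compat th.
Proof.
move=> threfl thtrans th1 f u w uw.
pose mix k (j : 'I_(ar f)) := if j < k then w j else u j.
suff mixP k : k <= ar f -> th (op u) (op (mix k)).
  rewrite (_ : w = mix (ar f)); first exact: mixP.
  by apply: functional_extensionality => j; rewrite /mix ltn_ord.
elim: k => [_|k IH lt_k].
  by rewrite (_ : mix 0 = u) //; apply: functional_extensionality.
apply: thtrans (IH (ltnW lt_k)) _; apply: (th1 _ _ _ (Ordinal lt_k)).
  by move=> j ji; rewrite /mix ltnS (leq_eqVlt j) -[_ == k]/(j == Ordinal lt_k) (negbTE ji).
by rewrite /mix ltnn ltnSn; apply: uw.
Qed.

(** * Polynomial functions and the Leibniz congruence *)

Definition upd0 T (v : nat -> T) (z : T) n := if n == 0 then z else v n.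

Definition upd_at T n (u : 'I_n -> T) (i : 'I_n) (z : T) j := if j == i then z else u j.

Definition polyfun A (p : A -> A) :=
  exists phi (v : nat -> A), forall z, p z = eval (upd0 v z) phi.

Lemma polyfun_id A (a : A) : polyfun (A := A) id.
Proof. by exists (Var ar 0), (fun _ => a). Qed.

Lemma polyfun_val2 A (d : term ar) (c : A) : polyfun (fun z => eval (val2 z c) d).
Proof. by exists d, (fun _ => c). Qed.

Lemma polyfun_comp A (p q : A -> A) : polyfun p -> polyfun q -> polyfun (fun z => p (q z)).
Proof.
move=> [phi [v pE]] [psi [w qE]].
(* the parameters of [psi] go to even variables, those of [phi] to odd ones *)
pose psi' := subst (fun k => Var ar k.*2) psi.
exists (subst (fun n => if n == 0 then psi' else Var ar n.*2.+1) phi).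
exists (fun n => if odd n then v n./2 else w n./2).
move=> z; rewrite pE eval_subst; apply: eval_ext => -[|n] /=.
  rewrite qE eval_subst; apply: eval_ext => -[|k] //.
  by rewrite /upd0 /= odd_double doubleK.
by rewrite /upd0 /= odd_double uphalf_double.
Qed.

Lemma polyfun_op_at A f (u : 'I_(ar f) -> A) i : polyfun (fun z => op (upd_at u i z)).
Proof.
exists (App (fun j : 'I_(ar f) => if j == i then Var ar 0 else Var ar j.+1)).
exists (fun n => u (insubd i n.-1)).
move=> z /=; congr op; apply: functional_extensionality => j.
rewrite /upd_at; case: (j == i) => //=.
by congr u; apply: val_inj; rewrite /= val_insubd ltn_ord.
Qed.

Lemma polyfun_compat A (th : A -> A -> Prop) (p : A -> A) a b :
  (forall c, th c c) -> op_compat th -> polyfun p -> th a b -> th (p a) (p b).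
Proof.
move=> threfl thop [phi [v pE]] thab; rewrite !pE.
by apply: eval_compat => // -[|n].
Qed.

Section Leibniz.
Variables (A : algebra ar) (F : A -> Prop).

Definition poly_indist a b := forall p, polyfun p -> F (p a) <-> F (p b).

Lemma poly_indist_congruence : is_congruence poly_indist.
Proof.
have pi_trans a b c : poly_indist a b -> poly_indist b c -> poly_indist a c.
  by move=> ab bc p pp; rewrite (ab p pp) (bc p pp).
split=> //; first by move=> a b ab p pp; rewrite (ab p pp).
apply: op_compat_coordinatewise => // f u w i uw ui_wi p pp.
have := ui_wi _ (polyfun_comp pp (polyfun_op_at u i)).
rewrite (_ : upd_at u i (u i) = u); last first.
  by apply: functional_extensionality => j; rewrite /upd_at; case: eqP => [->|].
rewrite (_ : upd_at u i (w i) = w) //.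
apply: functional_extensionality => j; rewrite /upd_at.
by case: eqP => [->|/eqP/uw].
Qed.

Lemma Leibniz_poly_indist a b : Leibniz F a b <-> poly_indist a b.
Proof.
split=> [[th [[threfl thsym _ thop] thF thab]] p pp|ab].
  have thp := polyfun_compat threfl thop pp thab.
  by split; [exact: thF thp | exact: thF (thsym _ _ thp)].
exists poly_indist; split=> //; first exact: poly_indist_congruence.
by move=> c d cd Fc; apply/(cd id (polyfun_id c)).
Qed.

Lemma Leibniz_congruence : is_congruence (Leibniz F).
Proof.
rewrite (_ : Leibniz F = poly_indist); first exact: poly_indist_congruence.
do 2!apply: functional_extensionality => ?.
by apply: propositional_extensionality; apply: Leibniz_poly_indist.
Qed.

Lemma Leibniz_compatible : compatible (Leibniz F) F.
Proof. by move=> a b [th [_ thF thab]]; apply: thF. Qed.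

Lemma Leibniz_refl a : Leibniz F a a.
Proof. by case: Leibniz_congruence. Qed.

Lemma Leibniz_sym a b : Leibniz F a b -> Leibniz F b a.
Proof. by case: Leibniz_congruence => _ sym _ _; apply: sym. Qed.

End Leibniz.

Lemma Leibniz_hom_pullback A B (h : A -> B) (F : A -> Prop) (G : B -> Prop) a b :
  hom h -> (forall c, G (h c) <-> F c) -> Leibniz G (h a) (h b) -> Leibniz F a b.
Proof.
move=> hh GF [th [[threfl thsym thtrans thop] thG thab]].
exists (fun c d => th (h c) (h d)); split=> //.
  split=> // [c d|c d e|f u w uw]; [exact: thsym | exact: thtrans |].
  by rewrite !hh; apply: thop.
by move=> c d cd; rewrite -!GF; apply: thG.
Qed.

Section Quotient.
Variables (A : algebra ar) (F : A -> Prop).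
Local Notation Om := (Leibniz F).

Lemma qclass_eq a b : qclass Om a = qclass Om b <-> Om a b.
Proof.
split=> [/(f_equal (@proj1_sig _ _)) /= ->|ab]; first exact: Leibniz_refl.
apply: eq_sig_hprop => [? ? ?|/=]; first exact: proof_irrelevance.
have [_ sym trans _] := Leibniz_congruence F.
apply: functional_extensionality => c; apply: propositional_extensionality.
by split; apply: trans; [apply: sym|].
Qed.

Lemma qrepK : cancel (@qrep _ _ A Om) (qclass Om).
Proof.
move=> c; apply: eq_sig_hprop => [? ? ?|/=]; first exact: proof_irrelevance.
by rewrite /qrep; case: constructive_indefinite_description.
Qed.

Lemma qrep_class a : Om (qrep (qclass Om a)) a.
Proof. by apply/qclass_eq; rewrite qrepK. Qed.

Lemma qclass_hom : hom (A := A) (B := quot_alg Om) (qclass Om).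
Proof.
move=> f u; apply/qclass_eq; have [_ sym _ thop] := Leibniz_congruence F.
by apply: thop => i; apply: sym; apply: qrep_class.
Qed.

Definition quot_fil (c : quot_alg Om) := F (qrep c).

Lemma quot_fil_class a : quot_fil (qclass Om a) <-> F a.
Proof.
by split; apply: Leibniz_compatible; [|apply: Leibniz_sym]; apply: qrep_class.
Qed.

Lemma quot_model L : model L F -> model L quot_fil.
Proof. exact: model_hom_image qclass_hom qrepK quot_fil_class. Qed.

Lemma quot_reduced : reduced quot_fil.
Proof.
move=> c d; rewrite -(qrepK c) -(qrepK d) => cd.
by apply/qclass_eq; apply: Leibniz_hom_pullback qclass_hom quot_fil_class cd.
Qed.

Lemma sat_eqs_quot tau a :
  sat_eqs (A := quot_alg Om) tau (qclass Om a) <->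
  forall e, tau e -> Om (eval (fun _ => a) e.1) (eval (fun _ => a) e.2).
Proof.
have evalE t :
    eval (A := quot_alg Om) (fun _ => qclass Om a) t = qclass Om (eval (fun _ => a) t).
  by rewrite (eval_hom _ _ qclass_hom).
by split=> H e /H; rewrite !evalE => /qclass_eq.
Qed.

End Quotient.

Lemma sval_hom A (S : A -> Prop) (hS : op_closed S) :
  hom (A := sub_alg hS) (@proj1_sig _ S).
Proof. by []. Qed.

Lemma eval_sval A (S : A -> Prop) (hS : op_closed S) (v : nat -> sub_alg hS) t :
  proj1_sig (eval v t) = eval (fun n => proj1_sig (v n)) t.
Proof. exact: eval_hom (@sval_hom _ _ hS). Qed.

Lemma sub_model L A (F : A -> Prop) (S : A -> Prop) (hS : op_closed S) :
  model L F -> model L (fun c : sub_alg hS => F (proj1_sig c)).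
Proof. exact: model_hom_preimage (@sval_hom _ _ hS). Qed.

Section Generated.
Variables (A : algebra ar) (w : nat -> A).

Definition generated a := exists t, a = eval w t.

Lemma generated_closed : op_closed generated.
Proof.
move=> f u gen_u; have [tu tuE] := functional_choice _ gen_u.
by exists (App tu) => /=; congr op; apply: functional_extensionality.
Qed.

Definition gen_alg := sub_alg generated_closed.

Definition gen_val n : gen_alg := exist _ (w n) (ex_intro _ (Var ar n) erefl).

Lemma eval_gen_val t : proj1_sig (eval gen_val t) = eval w t.
Proof. exact: eval_sval. Qed.

Lemma gen_alg_terms (v : nat -> gen_alg) :
  exists tv, forall n, proj1_sig (v n) = eval w (tv n).
Proof. exact: functional_choice _ (fun n => proj2_sig (v n)). Qed.

End Generated.

End Algebras.

(** * Systems of formulas in two variables *)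

Section DeltaSystems.
Variables (Op : Type) (ar : Op -> nat).
Implicit Types (A : algebra ar) (t d : term ar) (L : logic ar) (Delta : term ar -> Prop).

Definition Delta_in A (F : A -> Prop) Delta a b := forall d, Delta d -> F (eval (val2 a b) d).

Lemma eval_val2 A (v : nat -> A) d : vars_in xy_var d -> eval v d = eval (val2 (v 0) (v 1)) d.
Proof. by move/eval_xy; apply. Qed.

Lemma eval_s_xx A (v : nat -> A) d :
  vars_in xy_var d -> eval v (subst (s_xx ar) d) = eval (val2 (v 0) (v 0)) d.
Proof. by move=> xyd; rewrite eval_subst (eval_val2 _ xyd). Qed.

Lemma eval_s_i A (v : nat -> A) (i : nat) d :
  vars_in xy_var d -> eval v (subst (s_i ar i) d) = eval (val2 (v (2 * i)) (v (2 * i + 1))) d.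
Proof. by move=> xyd; rewrite eval_subst (eval_val2 _ xyd). Qed.

Lemma eval_s_f A (v : nat -> A) f d :
  vars_in xy_var d -> eval v (subst (s_f ar f) d) =
  eval (val2 (op (fun i : 'I_(ar f) => v (2 * i))) (op (fun i : 'I_(ar f) => v (2 * i + 1)))) d.
Proof. by move=> xyd; rewrite eval_subst (eval_val2 _ xyd). Qed.

Lemma cond1_refl L Delta A (F : A -> Prop) a :
  cond1 L Delta -> model L F -> Delta_in F Delta a a.
Proof.
move=> [xyD DL _] FL d Dd.
by have := FL _ _ (DL d Dd) (val2 a a) (fun _ => False_ind _); rewrite (eval_s_xx _ (xyD d Dd)).
Qed.

Lemma cond1_mp L Delta A (F : A -> Prop) a b :
  cond1 L Delta -> model L F -> F a -> Delta_in F Delta a b -> F b.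
Proof. by move=> [_ _ mp] FL Fa ab; apply: (FL _ _ mp (val2 a b)) => g [->|/ab]. Qed.

Lemma Leibniz_Delta_in L Delta A (F : A -> Prop) a b :
  cond1 L Delta -> model L F -> Leibniz F a b -> Delta_in F Delta a b.
Proof.
move=> c1 FL [th [[threfl _ _ thop] thF thab]] d Dd.
apply: (thF (eval (val2 a a) d)); last exact: (cond1_refl a c1 FL Dd).
by apply: eval_compat => // -[|n].
Qed.

Lemma Leibniz_poly_Delta L Delta A (F : A -> Prop) a b :
  cond1 L Delta -> model L F ->
  Leibniz F a b <-> forall p, polyfun p -> Delta_in F Delta (p a) (p b).
Proof.
move=> c1 FL; split=> [ab p pp|ab].
  apply: Leibniz_Delta_in c1 FL _; have [threfl _ _ thop] := Leibniz_congruence F.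
  exact: polyfun_compat threfl thop pp ab.
have detach c e : (forall p, polyfun p -> Delta_in F Delta (p c) (p e)) ->
    forall p, polyfun p -> F (p c) -> F (p e).
  by move=> ce p pp /(cond1_mp c1 FL); apply; apply: ce.
have ba p : polyfun p -> Delta_in F Delta (p b) (p a).
  (* [Delta(p b, p a)] is detached from [Delta(p a, p a)] along [a Ω b] *)
  move=> pp d Dd; have qp := polyfun_comp (polyfun_val2 d (p a)) pp.
  by apply: (detach a b ab _ qp); exact: (cond1_refl (p a) c1 FL Dd).
by apply/Leibniz_poly_indist => p pp; split; apply: detach.
Qed.

Definition interleave T n (u w : 'I_n -> T) (z : T) k :=
  if insub k./2 is Some j then (if odd k then w j else u j) else z.

Lemma interleave_even T n (u w : 'I_n -> T) (z : T) (j : 'I_n) : interleave u w z (2 * j) = u j.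
Proof. by rewrite /interleave mul2n doubleK valK odd_double. Qed.

Lemma interleave_odd T n (u w : 'I_n -> T) (z : T) (j : 'I_n) : interleave u w z (2 * j + 1) = w j.
Proof. by rewrite /interleave addn1 mul2n /= uphalf_double valK odd_double. Qed.

Lemma cond2_op_compat L Delta A (F : A -> Prop) :
  cond2 L Delta -> model L F -> op_compat (Delta_in F Delta).
Proof.
move=> [[xyD _ _] congD] FL f u w uw d Dd.
pose v := interleave u w (op u).
have := FL _ _ (congD f d Dd) v; rewrite (eval_s_f _ _ (xyD d Dd)).
have -> : (fun i : 'I_(ar f) => v (2 * i)) = u.
  by apply: functional_extensionality => i; rewrite /v interleave_even.
have -> : (fun i : 'I_(ar f) => v (2 * i + 1)) = w.
  by apply: functional_extensionality => i; rewrite /v interleave_odd.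
apply=> _ [i [d' [Dd' ->]]].
by rewrite (eval_s_i _ _ (xyD d' Dd')) /v interleave_even interleave_odd; apply: uw.
Qed.

Lemma cond2_Leibniz L Delta : cond2 L Delta ->
  forall A (F : A -> Prop), model L F ->
  forall a b, Leibniz F a b <-> Delta_in F Delta a b.
Proof.
move=> c2 A F FL a b; have [c1 _] := c2; rewrite (Leibniz_poly_Delta _ _ c1 FL).
split=> [/(_ id (polyfun_id a)) //|ab p pp].
exact: polyfun_compat (fun c => cond1_refl c c1 FL) (cond2_op_compat c2 FL) pp ab.
Qed.

Lemma equivalential_protoalgebraic L : equivalential L -> protoalgebraic L.
Proof.
move=> [Delta [xyD defD]]; exists Delta => A F FL a b; rewrite defD //.
split=> [ab v va vb d Dd|ab d Dd]; last exact: ab.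
by rewrite (eval_val2 _ (xyD d Dd)) va vb; apply: ab.
Qed.

Definition pair_subst (phi : term ar) n :=
  if n == 0 then phi else if n == 1 then subst (upd0 (Var ar) (Var ar 1)) phi else Var ar n.

Lemma eval_pair_subst A (v : nat -> A) phi d : vars_in xy_var d ->
  eval v (subst (pair_subst phi) d) =
  eval (val2 (eval (upd0 v (v 0)) phi) (eval (upd0 v (v 1)) phi)) d.
Proof.
move=> xyd; rewrite eval_subst (eval_val2 _ xyd) /= eval_subst.
by congr (eval (val2 _ _) d); apply: eval_ext => -[|n].
Qed.

Lemma cond1_protoalgebraic L Delta : cond1 L Delta -> protoalgebraic L.
Proof.
move=> c1; have [xyD _ _] := c1.
exists (fun d => exists delta phi, Delta delta /\ d = subst (pair_subst phi) delta).
move=> A F FL a b; rewrite (Leibniz_poly_Delta _ _ c1 FL).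
split=> [ab v va vb _ [delta [phi [Ddelta ->]]]|ab p [phi [v pE]] d Dd].
  rewrite (eval_pair_subst _ _ (xyD _ Ddelta)) va vb.
  by apply: (ab (fun z => eval (upd0 v z) phi) _ _ Ddelta); exists phi, v.
(* shift the parameters of [phi] past the variable [y] *)
pose V n := match n with 0 => a | 1 => b | n.+1 => v n end.
pose phi' := subst (fun n => if n is 0 then Var ar 0 else Var ar n.+1) phi.
have pE' z : p z = eval (upd0 V z) phi'.
  by rewrite pE eval_subst; apply: eval_ext => -[|n].
have := ab V erefl erefl _ (ex_intro _ d (ex_intro _ phi' (conj Dd erefl))).
by rewrite (eval_pair_subst _ _ (xyD d Dd)) -!pE'.
Qed.

Definition Leibniz_param_def L Delta :=
  forall A (F : A -> Prop), model L F -> forall a b : A, Leibniz F a b <->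
    (forall v : nat -> A, v 0 = a -> v 1 = b -> forall d, Delta d -> F (eval v d)).

(* In a generated submatrix every parameter is the value of a term. *)
Lemma Leibniz_generated L Delta A (F : A -> Prop) (w : nat -> A) s t :
  Leibniz_param_def L Delta -> model L F ->
  Leibniz (fun c : gen_alg w => F (proj1_sig c)) (eval (gen_val w) s) (eval (gen_val w) t) <->
  forall sg delta, sg 0 = s -> sg 1 = t -> Delta delta -> F (eval w (subst sg delta)).
Proof.
move=> defD FL; rewrite defD; last exact: sub_model.
split=> [st sg delta sg0 sg1 Ddelta|st v vs vt delta Ddelta].
  have := st (fun n => eval (gen_val w) (sg n)) _ _ _ Ddelta.
  rewrite sg0 sg1 eval_sval eval_subst => /(_ erefl erefl).
  by congr F; apply: eval_ext => n; rewrite eval_gen_val.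
have [tv tvE] := gen_alg_terms v.
pose sg n := if n == 0 then s else if n == 1 then t else tv n.
have := st sg delta erefl erefl Ddelta; rewrite eval_sval eval_subst.
by congr F; apply: eval_ext => -[|[|n]] /=; rewrite ?vs ?vt ?eval_gen_val ?tvE.
Qed.

End DeltaSystems.

(** * Logics determined by a list of matrices *)

Section MatrixLogics.
Variables (Op : Type) (ar : Op -> nat) (M : list (matrix ar)).
Implicit Types (A : algebra ar) (Delta : term ar -> Prop).
Local Notation L := (cons_of M).

Lemma matrix_model m : List.In m M -> model L (mfil (m := m)).
Proof. by move=> Mm Gamma phi; apply. Qed.

Lemma cond2_of_matrix_Leibniz Delta :
  (forall d, Delta d -> vars_in xy_var d) ->
  (forall m, List.In m M -> forall a b,
     Leibniz (mfil (m := m)) a b <-> Delta_in (mfil (m := m)) Delta a b) ->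
  cond2 L Delta.
Proof.
move=> xyD defD; split; first split=> //.
- move=> d Dd m Mm v _; rewrite (eval_s_xx _ (xyD d Dd)).
  exact: (defD m Mm _ _).1 (Leibniz_refl _ _) _ Dd.
- move=> m Mm v prem; apply: (Leibniz_compatible (a := v 0)).
    by apply/defD => // d Dd; rewrite -(eval_val2 _ (xyD d Dd)); apply: prem; right.
  exact: prem (or_introl erefl).
- move=> f prem d Dd m Mm v premv; rewrite (eval_s_f _ _ (xyD d Dd)).
  apply: (defD m Mm _ _).1 _ _ Dd; have [_ _ _ Lop] := Leibniz_congruence (mfil (m := m)).
  apply: Lop => i; apply/defD => // d' Dd'.
  by rewrite -(eval_s_i _ _ (xyD d' Dd')); apply: premv; exists i, d'.
Qed.

Lemma equivalential_cond2 : equivalential L <-> exists Delta, cond2 L Delta.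
Proof.
split=> [[Delta [xyD defD]]|[Delta c2]]; exists Delta.
  by apply: cond2_of_matrix_Leibniz => // m Mm; apply: defD; apply: matrix_model.
by split; [case: c2 => -[] | apply: cond2_Leibniz].
Qed.

Lemma protoalgebraic_cond1 : protoalgebraic L <-> exists Delta, cond1 L Delta.
Proof.
split=> [[Delta0 defD]|[Delta c1]]; last exact: cond1_protoalgebraic c1.
pose D d := exists tau delta, [/\ Delta0 delta, tau 0 = Var ar 0, tau 1 = Var ar 1,
  (forall n, vars_in xy_var (tau n)) & d = subst tau delta].
exists D; split.
- by move=> _ [tau [delta [_ _ _ xytau ->]]]; apply: vars_in_subst.
- move=> _ [tau [delta [Ddelta tau0 tau1 _ ->]]] m Mm v _; rewrite !eval_subst.
  apply: (defD _ _ (matrix_model Mm) (v 0) (v 0)).1 (Leibniz_refl _ _) _ _ _ _ Ddelta.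
    by rewrite tau0.
  by rewrite tau1.
move=> m Mm w prem; pose w' := val2 (w 0) (w 1).
pose to_xy n := if n == 0 then Var ar 0 else Var ar 1.
have: Leibniz (fun c : gen_alg w' => mfil (proj1_sig c)) (eval (gen_val w') (Var ar 0))
        (eval (gen_val w') (Var ar 1)).
  apply/(Leibniz_generated _ _ _ defD (matrix_model Mm)) => sg delta sg0 sg1 Ddelta.
  pose tau n := subst to_xy (sg n).
  have xytau n : vars_in xy_var (tau n) by apply: vars_in_subst => -[|k]; [left|right].
  have := prem (subst tau delta); rewrite (eval_xy (w := w') (vars_in_subst _ xytau)) //.
  rewrite !eval_subst (_ : (fun n => eval w' (tau n)) = fun n => eval w' (sg n)).
    by apply; right; exists tau, delta; rewrite /tau sg0 sg1.
  apply: functional_extensionality => n; rewrite eval_subst.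
  by apply: eval_ext => -[|k].
by move/Leibniz_compatible; apply; exact: prem (or_introl erefl).
Qed.

Lemma cond3_Leibniz tau m (S : malg m -> Prop) (hS : op_closed S) (b : sub_alg hS) :
  cond3 M tau -> List.In m M ->
  let FB := fun c : sub_alg hS => mfil (proj1_sig c) in
  FB b <-> forall e, tau e -> Leibniz FB (eval (fun _ => b) e.1) (eval (fun _ => b) e.2).
Proof. by move=> [_ c3] Mm; rewrite /= (c3 m Mm S hS b) sat_eqs_quot. Qed.

Lemma truth_equational_cond3 : truth_equational L -> exists tau, cond3 M tau.
Proof.
move=> [tau [xtau TE]]; exists tau; split=> // m Mm S hS b FB.
have FBL : model L FB by apply: sub_model; apply: matrix_model.
by rewrite -(TE _ _ (quot_model FBL) (@quot_reduced _ _ _ FB)) quot_fil_class.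
Qed.

Section ProtoCond3.
Variables (Delta0 : term ar -> Prop) (tau : term ar * term ar -> Prop).
Hypotheses (defD : Leibniz_param_def L Delta0) (c3 : cond3 M tau).

Lemma cond3_generated m (w : nat -> malg m) : List.In m M ->
  mfil (w 0) <-> forall e, tau e -> forall sg delta, sg 0 = e.1 -> sg 1 = e.2 ->
                 Delta0 delta -> mfil (eval w (subst sg delta)).
Proof.
move=> Mm; have [xtau _] := c3.
rewrite (cond3_Leibniz (gen_val w 0) c3 Mm).
have evalE t : vars_in (fun n => n = 0) t -> eval (fun _ => gen_val w 0) t = eval (gen_val w) t.
  by move/eval_x; apply.
split=> st e /[dup] taue /st; have [x1 x2] := xtau e taue; rewrite !evalE //.
  by move/(Leibniz_generated _ _ _ defD (matrix_model Mm)).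
by move=> H; apply/(Leibniz_generated _ _ _ defD (matrix_model Mm)).
Qed.

Lemma cond3_filter_sat A (F : A -> Prop) a :
  model L F -> reduced F -> F a -> sat_eqs tau a.
Proof.
move=> FL Fred Fa e taue; have [xtau _] := c3; have [x1 x2] := xtau e taue.
apply: Fred; apply/(defD FL _ _) => v v0 v1 delta Ddelta.
pose sg n := if n == 0 then e.1 else if n == 1 then e.2 else Var ar n.
have x_delta : L (fun g => g = Var ar 0) (subst sg delta).
  by move=> m Mm w /(_ _ erefl) /(cond3_generated _ Mm) /(_ e taue sg delta); apply.
have -> : eval v delta = eval (upd0 v a) (subst sg delta).
  by rewrite eval_subst; apply: eval_ext => -[|[|n]] //=; rewrite ?v0 ?v1; apply: eval_x.
by apply: (FL _ _ x_delta) => _ ->.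
Qed.

Lemma cond3_sat_filter A (F : A -> Prop) a : model L F -> sat_eqs tau a -> F a.
Proof.
move=> FL sat_a.
pose G g := exists e sg delta,
  [/\ tau e, sg 0 = e.1, sg 1 = e.2, Delta0 delta & g = subst sg delta].
have G_x : L G (Var ar 0).
  move=> m Mm w Gw; apply/(cond3_generated _ Mm) => e taue sg delta sg0 sg1 Ddelta.
  by apply: Gw; exists e, sg, delta.
apply: (FL _ _ G_x (fun _ => a)) => _ [e [sg [delta [taue sg0 sg1 Ddelta ->]]]].
rewrite eval_subst; apply: ((defD FL _ _).1 (Leibniz_refl F (eval (fun _ => a) e.1))) => //.
  by rewrite /= sg0.
by rewrite /= sg1 (sat_a e taue).
Qed.

End ProtoCond3.

Lemma cond3_truth_equational tau : protoalgebraic L -> cond3 M tau -> truth_equational L.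
Proof.
move=> [Delta0 defD] c3; exists tau; split; first by case: c3.
move=> A F FL Fred a; split; first exact: (cond3_filter_sat defD c3 FL Fred).
exact: (cond3_sat_filter defD c3 FL).
Qed.

End MatrixLogics.

Theorem theorem2p1 (Op : Type) (ar : Op -> nat) (M : list (matrix ar))
  (hM : forall m, List.In m M -> finite_type (malg m)) :
  let L := cons_of M in
  (* (1) *)
  (protoalgebraic L <-> exists Delta, cond1 L Delta) /\
  (* (2) *)
  ((equivalential L <-> exists Delta, cond2 L Delta) /\
   forall Delta, cond2 L Delta ->
   forall (A : algebra ar) (F : A -> Prop), model L F ->
   forall a b : A, Leibniz F a b <-> (forall d, Delta d -> F (eval (val2 a b) d))) /\
  (* (3) *)
  (weakly_algebraizable L <-> protoalgebraic L /\ exists tau, cond3 M tau) /\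
  (algebraizable L <-> equivalential L /\ exists tau, cond3 M tau).
Proof.
move=> L; split; first exact: protoalgebraic_cond1.
split; first by split; [exact: equivalential_cond2 | exact: cond2_Leibniz].
split; split.
- by case=> protoL TE; split=> //; apply: truth_equational_cond3.
- by case=> protoL [tau c3]; split=> //; apply: cond3_truth_equational protoL c3.
- by case=> equivL TE; split=> //; apply: truth_equational_cond3.
- case=> equivL [tau c3]; split=> //.
  exact: cond3_truth_equational (equivalential_protoalgebraic equivL) c3.
Qed.
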